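(* Let $f \in \mathbb{N}_0[x^{\pm 1}]$ be such that $f(1)$ is a prime number. Then $f$ is irreducible in $\mathbb{N}_0[x^{\pm 1}]$.
   Context: $\mathbb{N}_0[x^{\pm 1}]$ denotes the semiring of Laurent polynomials in $x$ with nonnegative integer coefficients. Its units are exactly the monomials $x^k$, $k \in \mathbb{Z}$. An element $f$ is irreducible if it is nonzero, not a unit, and whenever $f = gh$ with $g,h \in \mathbb{N}_0[x^{\pm 1}]$, one of $g,h$ is a unit. *)

From mathcomp Require Import all_boot all_order all_algebra.
Set Implicit Arguments. Unset Strict Implicit. Unset Printing Implicit Defensive.
Import GRing.Theory.
Local Open Scope ring_scope.

(* Model of the semiring N_0[x^{+-1}]:
   a pair (p, k) with p : {poly nat} and k : nat represents the Laurent
   polynomial  p(x) * x^{-k}.  Every Laurent polynomial with nonnegative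
   integer coefficients has such a representation; two representations
   denote the same element iff  p * x^l = q * x^k  (setoid equality lp_eq). *)
Record laurentN := LaurentN { lp_poly : {poly nat}; lp_shift : nat }.

Definition lp_eq (f g : laurentN) : Prop :=
  lp_poly f * 'X^(lp_shift g) = lp_poly g * 'X^(lp_shift f).

Definition lp_mul (f g : laurentN) : laurentN :=
  LaurentN (lp_poly f * lp_poly g) (lp_shift f + lp_shift g)%N.

Definition lp_one : laurentN := LaurentN 1 0.
Definition lp_zero : laurentN := LaurentN 0 0.

Definition lp_eval1 (f : laurentN) : nat := (lp_poly f).[1].

Definition lp_unit (f : laurentN) : Prop :=
  exists g : laurentN, lp_eq (lp_mul f g) lp_one.

Definition lp_irreducible (f : laurentN) : Prop :=
  ~ lp_eq f lp_zero /\ ~ lp_unit f /\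
  forall g h : laurentN, lp_eq f (lp_mul g h) -> lp_unit g \/ lp_unit h.

(* Since the coefficients are nonnegative integers summing to
   f(1), an element with f(1) = 1 is a single monomial x^k, i.e. a unit, and
   conversely every unit has f(1) = 1. Hence if f(1) is prime, f is neither zero
   nor a unit, and any factorization f = g h gives f(1) = g(1) h(1), so one of
   g(1), h(1) is 1 and the corresponding factor is a unit. *)
From mathcomp Require Import all_boot all_order all_algebra.
Import GRing.Theory.
Local Open Scope ring_scope.

Lemma prime_mul_eq1 {m n : nat} : prime (m * n) -> (m == 1)%N || (n == 1)%N.
Proof.
case/primeP=> mn_gt1 /(_ m (dvdn_mulr n (dvdnn m))) /orP[-> // | ].
have m_gt0 : (0 < m)%N by case: m mn_gt1.
by rewrite -{1}(muln1 m) eqn_pmul2l // eq_sym => ->; rewrite orbT.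
Qed.

Section NatPoly.

Implicit Types p : {poly nat}.

Lemma coefD_le_horner1 p {i j : nat} : i != j -> ((p`_i)%R + (p`_j)%R <= p.[1])%N.
Proof.
move=> neq_ij; set n := maxn (size p) (maxn i j).+1.
have [size_le_n i_lt_n j_lt_n] : [/\ size p <= n, i < n & j < n]%N.
  by rewrite !leq_max !ltnS !leq_max !leqnn !orbT.
rewrite (horner_coef_wide 1 size_le_n).
rewrite (bigD1 (Ordinal i_lt_n)) // (bigD1 (Ordinal j_lt_n)) //=; last first.
  by rewrite -val_eqE /= eq_sym.
by rewrite !expr1n !mulr1 addrA; exact: leq_addr.
Qed.

Lemma coef_le_horner1 p (i : nat) : ((p`_i)%R <= p.[1])%N.
Proof.
have neq_iSi : i != i.+1 by rewrite neq_ltn ltnSn.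
exact: leq_trans (leq_addr _ _) (coefD_le_horner1 p neq_iSi).
Qed.

Lemma horner1_eq1 p : p.[1] = 1%N -> exists k, p = 'X^k.
Proof.
move=> p1_eq1; have p_neq0 : p != 0 by apply: contra_eq_neq p1_eq1 => ->; rewrite horner0.
set k := (size p).-1; exists k.
have pk_eq1 : p`_k = 1%N.
  apply/eqP; rewrite eqn_leq -{1}p1_eq1 coef_le_horner1 lt0n.
  by rewrite -lead_coefE lead_coef_eq0.
apply/polyP=> j; rewrite coefXn; have [->|neq_jk] := eqVneq j k => //.
have := coefD_le_horner1 p neq_jk; rewrite pk_eq1 p1_eq1 addnC.
by case: (p`_j).
Qed.

End NatPoly.

Lemma lp_eval1_eq (f g : laurentN) : lp_eq f g -> lp_eval1 f = lp_eval1 g.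
Proof.
rewrite /lp_eq /lp_eval1 => /(congr1 (horner^~ 1)).
by rewrite !hornerM !hornerXn !expr1n !mulr1.
Qed.

Lemma lp_eval1_mul (f g : laurentN) :
  lp_eval1 (lp_mul f g) = (lp_eval1 f * lp_eval1 g)%N.
Proof. exact: hornerM. Qed.

Lemma lp_unitP (f : laurentN) : lp_unit f <-> lp_eval1 f = 1%N.
Proof.
split=> [[g /lp_eval1_eq]|].
  rewrite lp_eval1_mul /lp_eval1 hornerC => /eqP.
  by rewrite muln_eq1 => /andP[/eqP].
case: f => p k; rewrite /lp_eval1 /= => /horner1_eq1[n ->].
exists (LaurentN 'X^k n); rewrite /lp_eq /lp_mul /=.
by rewrite expr0 mulr1 mul1r -exprD addnC.
Qed.

Theorem lemma2p1 (f : laurentN) : prime (lp_eval1 f) -> lp_irreducible f.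
Proof.
move=> f1_prime; split; [|split].
- by move/lp_eval1_eq=> f1_eq0; move: f1_prime; rewrite f1_eq0 /lp_eval1 horner0.
- by move/lp_unitP=> f1_eq1; rewrite f1_eq1 in f1_prime.
- move=> g h /lp_eval1_eq; rewrite lp_eval1_mul => f1_eq; rewrite f1_eq in f1_prime.
  by case/orP: (prime_mul_eq1 f1_prime) => /eqP/lp_unitP; [left | right].
Qed.
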